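(* Let $A$ take values $a_1,\ldots,a_{N_A}$ and $B$ take values $b_1,\ldots,b_{N_B}$. Let $P_K$ be a non-product joint probability distribution on $(A,B)$ obeying the Kolmogorov axioms of probability (so $P_K(a_i,b_j)\ge 0$, $\sum_{i,j}P_K(a_i,b_j)=1$), with all marginals nonzero and with conditional matrix $\mathbf{P}_K(A|B)$ (entries $P_K(a_i,b_j)/P_K(b_j)$) invertible. Then there exists a generalized two-variable probability assignment $P_I$ (as defined in the context) satisfying Axiom 5 such that $P_K(a_i,b_j)=P_I(a_i,b_j)$ for all $i$ and $j$.
   Context: Generalized two-variable probability assignment: a pair of real-valued (not necessarily nonnegative) arrays $P(a_i,b_j)$ (probability relative to the ordering in which $B$ precedes $A$) and $P(b_j,a_i)$ (relative to the ordering in which $A$ precedes $B$) with $\sum_{i,j}P(a_i,b_j)=1=\sum_{i,j}P(b_j,a_i)$ and ordering-independent marginals: $P(a_i)=\sum_j P(a_i,b_j)=\sum_j P(b_j,a_i)$, $P(b_j)=\sum_i P(a_i,b_j)=\sum_i P(b_j,a_i)$. Conditionals: $P(a_i|b_j)=P(a_i,b_j)/P(b_j)$, $P(b_j|a_i)=P(b_j,a_i)/P(a_i)$; $\mathbf{P}(A|B)$ is the $N_A\times N_B$ matrix of $P(a_i|b_j)$ and $\mathbf{P}(B|A)$ the $N_B\times N_A$ matrix of $P(b_j|a_i)$; $\vec P(A),\vec P(B)$ are the marginal vectors. Axiom 5 (inference axiom): $\mathbf{P}(A|B)$ and $\mathbf{P}(B|A)$ may be specified independently of $\vec P(B)$ and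 $\vec P(A)$, i.e. the same conditional matrices are consistent with $\vec P(A)=\mathbf{P}(A|B)\vec P(B)$ and $\vec P(B)=\mathbf{P}(B|A)\vec P(A)$ for every choice of the marginals. A distribution is a product distribution if $P(a_i,b_j)=P(a_i)P(b_j)$ for all $i,j$; otherwise non-product. *)

From mathcomp Require Import all_boot all_order all_algebra.
Set Implicit Arguments. Unset Strict Implicit. Unset Printing Implicit Defensive.
Import Order.TTheory GRing.Theory Num.Theory.
Local Open Scope ring_scope.

Section Defs.
Variables (R : realFieldType) (nA nB : nat).

(* A two-variable array indexed by (i,j) : 'I_nA * 'I_nB.
   Pab i j stands for P(a_i,b_j); Pba i j stands for P(b_j,a_i). *)

Definition margA (P : 'M[R]_(nA, nB)) : 'cV[R]_nA := \col_i \sum_j P i j.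
Definition margB (P : 'M[R]_(nA, nB)) : 'cV[R]_nB := \col_j \sum_i P i j.

Definition condAB (P : 'M[R]_(nA, nB)) : 'M[R]_(nA, nB) :=
  \matrix_(i, j) (P i j / margB P j 0).
Definition condBA (Q : 'M[R]_(nA, nB)) : 'M[R]_(nB, nA) :=
  \matrix_(j, i) (Q i j / margA Q i 0).

Definition gen_assignment (Pab Pba : 'M[R]_(nA, nB)) : Prop :=
  [/\ \sum_i \sum_j Pab i j = 1,
      \sum_i \sum_j Pba i j = 1,
      margA Pab = margA Pba &
      margB Pab = margB Pba].

Definition axiom5 (Pab Pba : 'M[R]_(nA, nB)) : Prop :=
  forall (pA : 'cV[R]_nA) (pB : 'cV[R]_nB),
    pA = condAB Pab *m pB <-> pB = condBA Pba *m pA.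

Definition kolmogorov (P : 'M[R]_(nA, nB)) : Prop :=
  (forall i j, 0 <= P i j) /\ \sum_i \sum_j P i j = 1.

Definition product_distr (P : 'M[R]_(nA, nB)) : Prop :=
  forall i j, P i j = margA P i 0 * margB P j 0.

End Defs.

Definition invertible (R : realFieldType) (m n : nat) (M : 'M[R]_(m, n)) : Prop :=
  exists N : 'M[R]_(n, m), M *m N = 1%:M /\ N *m M = 1%:M.

(* Take P(a_i,b_j) := P_K(a_i,b_j) and let N be the inverse of C := P_K(A|B).
   Since the columns of C sum to 1, so do those of N, hence
   P(b_j,a_i) := N_ji P_K(a_i) has A-marginal P_K(A), B-marginal
   N P_K(A) = N C P_K(B) = P_K(B), and conditional matrix P(B|A) = N.
   Axiom 5 then says exactly that C and N are mutually inverse. *)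
From mathcomp Require Import all_boot all_order all_algebra.
Set Implicit Arguments. Unset Strict Implicit. Unset Printing Implicit Defensive.
Import Order.TTheory GRing.Theory Num.Theory.
Local Open Scope ring_scope.

Section ConditionalMatrices.
Variable R : realFieldType.

Lemma sum_condAB_col (nA nB : nat) (P : 'M[R]_(nA, nB)) j :
  margB P j 0 != 0 -> \sum_i condAB P i j = 1.
Proof.
rewrite mxE => PBj; under eq_bigr => i _ do rewrite mxE.
by rewrite -mulr_suml mxE divff.
Qed.

Lemma condAB_mul_margB (nA nB : nat) (P : 'M[R]_(nA, nB)) :
  (forall j, margB P j 0 != 0) -> condAB P *m margB P = margA P.
Proof.
move=> PB; apply/matrixP => i k; rewrite !ord1 !mxE.
apply: eq_bigr => j _; rewrite !mxE divfK //.
by move: (PB j); rewrite mxE.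
Qed.

(* 1^T N = (1^T C) N = 1^T (C N) = 1^T. *)
Lemma sum_col_right_inverse (m n : nat) (C : 'M[R]_(m, n)) (N : 'M[R]_(n, m)) :
  C *m N = 1%:M -> (forall j, \sum_i C i j = 1) -> forall i, \sum_j N j i = 1.
Proof.
move=> CN sumC i.
have -> : \sum_j N j i = \sum_k (C *m N) k i.
  under [RHS]eq_bigr => k _ do rewrite mxE.
  rewrite exchange_big /=; apply: eq_bigr => j _.
  by rewrite -mulr_suml sumC mul1r.
rewrite CN (bigD1 i) //= big1 ?addr0 => [|k /negbTE ki]; rewrite mxE ?eqxx //.
by rewrite ki.
Qed.

Definition joint_of_cond (nA nB : nat) (N : 'M[R]_(nB, nA)) (pA : 'cV[R]_nA) :
  'M[R]_(nA, nB) := \matrix_(i, j) (N j i * pA i 0).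

Lemma margA_joint_of_cond (nA nB : nat) (N : 'M[R]_(nB, nA)) (pA : 'cV[R]_nA) :
  (forall i, \sum_j N j i = 1) -> margA (joint_of_cond N pA) = pA.
Proof.
move=> sumN; apply/matrixP => i k; rewrite !ord1 mxE.
under eq_bigr => j _ do rewrite mxE.
by rewrite -mulr_suml sumN mul1r.
Qed.

Lemma margB_joint_of_cond (nA nB : nat) (N : 'M[R]_(nB, nA)) (pA : 'cV[R]_nA) :
  margB (joint_of_cond N pA) = N *m pA.
Proof.
by apply/matrixP => j k; rewrite !ord1 !mxE; apply: eq_bigr => i _; rewrite mxE.
Qed.

Lemma condBA_joint_of_cond (nA nB : nat) (N : 'M[R]_(nB, nA)) (pA : 'cV[R]_nA) :
  (forall i, \sum_j N j i = 1) -> (forall i, pA i 0 != 0) ->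
  condBA (joint_of_cond N pA) = N.
Proof.
move=> sumN pA0; apply/matrixP => j i.
by rewrite mxE margA_joint_of_cond // mxE mulfK.
Qed.

Lemma axiom5_inverse_conds (nA nB : nat) (Pab Pba : 'M[R]_(nA, nB)) :
  condAB Pab *m condBA Pba = 1%:M -> condBA Pba *m condAB Pab = 1%:M ->
  axiom5 Pab Pba.
Proof.
by move=> CN NC pA pB; split=> ->; rewrite mulmxA ?NC ?CN mul1mx.
Qed.

Lemma sum_margA (nA nB : nat) (P : 'M[R]_(nA, nB)) :
  \sum_i \sum_j P i j = \sum_i margA P i 0.
Proof. by apply: eq_bigr => i _; rewrite mxE. Qed.

Lemma gen_assignment_margins (nA nB : nat) (Pab Pba : 'M[R]_(nA, nB)) :
  \sum_i \sum_j Pab i j = 1 ->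
  margA Pab = margA Pba -> margB Pab = margB Pba ->
  gen_assignment Pab Pba.
Proof.
by move=> sum1 eqA eqB; split=> //; rewrite sum_margA -eqA -sum_margA.
Qed.

End ConditionalMatrices.

Theorem corollary1 (R : realFieldType) (nA nB : nat) (PK : 'M[R]_(nA, nB)) :
  kolmogorov PK ->
  ~ product_distr PK ->
  (forall i, margA PK i 0 != 0) ->
  (forall j, margB PK j 0 != 0) ->
  invertible (condAB PK) ->
  exists PIab PIba : 'M[R]_(nA, nB),
    [/\ gen_assignment PIab PIba,
        axiom5 PIab PIba &
        forall i j, PK i j = PIab i j].
Proof.
move=> [_ sumPK] _ PA PB [N [CN NC]].
have sumN := sum_col_right_inverse CN (fun j => sum_condAB_col (PB j)).
pose PIba := joint_of_cond N (margA PK).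
have condN : condBA PIba = N by apply: condBA_joint_of_cond.
have margB_PIba : margB PK = margB PIba.
  by rewrite margB_joint_of_cond -condAB_mul_margB // mulmxA NC mul1mx.
exists PK, PIba; split => //.
- by apply: gen_assignment_margins; rewrite ?margA_joint_of_cond.
- by apply: axiom5_inverse_conds; rewrite condN.
Qed.
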